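(* Let $\psi\in[0,2\pi)$ and consider, for $\kappa\in\mathbb{R}$, the equation $$\cos(\kappa\cos\psi)+\cos\!\Big(\tfrac{\kappa}{2}\cos\psi+\tfrac{\sqrt3\kappa}{2}\sin\psi\Big)+\cos\!\Big(\tfrac{\kappa}{2}\cos\psi-\tfrac{\sqrt3\kappa}{2}\sin\psi\Big)-3=0. \qquad (\ast\ast)$$ Then $(\ast\ast)$ has a real solution $\kappa\neq0$ if and only if $(\sqrt3\tan\psi-1)/2\in\mathbb{Q}_\infty$. In that case one can write $$\cos\psi=\frac{\sqrt3}{2}\frac{m_1}{\sqrt{m_1^2+m_1m_2+m_2^2}},\qquad \sin\psi=\frac12\frac{m_1+2m_2}{\sqrt{m_1^2+m_1m_2+m_2^2}}$$ with $(m_1,m_2)\in\mathbb{Z}^2\setminus\{(0,0)\}$, $\gcd(|m_1|,|m_2|)=1$, and the set of real solutions of $(\ast\ast)$ is exactly $$\Big\{\tfrac{4M\pi}{\sqrt3}\sqrt{m_1^2+m_1m_2+m_2^2} : M\in\mathbb{Z}\Big\}.$$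
   Context: $\mathbb{Q}_\infty := \mathbb{Q}\cup\{\pm\infty\}$, with the conventions $\tan(\pm\pi/2)=\pm\infty$ and $(\sqrt3\cdot(\pm\infty)-1)/2=\pm\infty$. *)

From Stdlib Require Import Reals ZArith QArith Qreals.
Open Scope R_scope.

Definition eqLHS (psi kappa : R) : R :=
  cos (kappa * cos psi)
  + cos (kappa / 2 * cos psi + sqrt 3 * kappa / 2 * sin psi)
  + cos (kappa / 2 * cos psi - sqrt 3 * kappa / 2 * sin psi)
  - 3.

(* (sqrt 3 * tan psi - 1)/2 lies in Q_infty = Q ∪ {±∞}.  With the conventions
   tan(±π/2) = ±∞, the value is ±∞ exactly when cos psi = 0. *)
Definition in_Qinf_tan (psi : R) : Prop :=
  cos psi = 0 \/ exists q : Q, (sqrt 3 * tan psi - 1) / 2 = Q2R q.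

(* The three cosines in (**) are at most 1, so (**) says that the vector
   kappa (cos psi, sin psi) has all its scalar products with (1, 0) and
   (1/2, +-sqrt 3/2) in 2 PI Z, i.e. it lies in a scaled triangular lattice.
   In lattice coordinates the direction psi is proportional to (m1, m2) with
   cos psi : sin psi = sqrt 3 m1 : m1 + 2 m2, which has a rational ratio
   exactly when (sqrt 3 tan psi - 1)/2 is in Q_infty.  When (m1, m2) is
   primitive, the lattice points on the ray are the integer multiples of one
   point, whose length is 4 PI sqrt (m1^2 + m1 m2 + m2^2) / sqrt 3. *)

From Stdlib Require Import Reals ZArith QArith Qreals Lra Lia Psatz.
Open Scope R_scope.

Definition in_2PIZ (x : R) : Prop := exists k : Z, x = 2 * PI * IZR k.

Lemma in_2PIZ_opp x : in_2PIZ (- x) <-> in_2PIZ x.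
Proof.
  enough (H : forall y, in_2PIZ y -> in_2PIZ (- y)).
  { split; [rewrite <- (Ropp_involutive x) at 2 |]; apply H. }
  intros y [k ->]. exists (- k)%Z. rewrite opp_IZR. ring.
Qed.

Lemma in_2PIZ_sub x y : in_2PIZ x -> in_2PIZ y -> in_2PIZ (x - y).
Proof. intros [k ->] [l ->]. exists (k - l)%Z. rewrite minus_IZR. ring. Qed.

Lemma in_2PIZ_scale y : in_2PIZ (2 * PI * y) <-> exists k : Z, y = IZR k.
Proof.
  pose proof PI_RGT_0.
  split; intros [k Hk]; exists k; [nra | now rewrite Hk].
Qed.

Lemma cos_eq_1_iff x : cos x = 1 <-> in_2PIZ x.
Proof.
  split.
  - intro H. replace x with (2 * (x / 2)) in H by field.
    rewrite cos_2a_sin in H.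
    destruct (sin_eq_0_0 (x / 2)) as [k Hk]; [nra |].
    exists k. lra.
  - intros [k ->].
    replace (2 * PI * IZR k) with (2 * (IZR k * PI)) by ring.
    rewrite cos_2a_sin, sin_eq_0_1 by (exists k; ring). ring.
Qed.

(* The middle phase is the difference of the other two, so two conditions suffice. *)
Lemma eqLHS_eq0_iff psi kappa :
  eqLHS psi kappa = 0 <->
  in_2PIZ (kappa * cos psi) /\
  in_2PIZ (kappa / 2 * cos psi - sqrt 3 * kappa / 2 * sin psi).
Proof.
  unfold eqLHS.
  set (t1 := kappa * cos psi).
  set (t2 := kappa / 2 * cos psi + sqrt 3 * kappa / 2 * sin psi).
  set (t3 := kappa / 2 * cos psi - sqrt 3 * kappa / 2 * sin psi).
  split.
  - intro H.
    pose proof (COS_bound t1). pose proof (COS_bound t2). pose proof (COS_bound t3).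
    split; apply cos_eq_1_iff; lra.
  - intros [H1 H3].
    assert (H2 : in_2PIZ t2).
    { replace t2 with (t1 - t3) by (unfold t1, t2, t3; field).
      now apply in_2PIZ_sub. }
    apply cos_eq_1_iff in H1, H2, H3. rewrite H1, H2, H3. ring.
Qed.

Lemma Q2R_inject_Z z : Q2R (inject_Z z) = IZR z.
Proof. unfold Q2R, inject_Z. simpl. rewrite Rinv_1. ring. Qed.

Lemma in_Qinf_tan_of_solution psi kappa :
  kappa <> 0 -> eqLHS psi kappa = 0 -> in_Qinf_tan psi.
Proof.
  intros Hk H. apply eqLHS_eq0_iff in H as [[a Ha] [c Hc]].
  destruct (Req_dec (cos psi) 0) as [H0 | Hc0]; [now left | right].
  pose proof PI_RGT_0.
  assert (Ha0 : IZR a <> 0).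
  { intro E. rewrite E in Ha. apply (Rmult_integral_contrapositive kappa (cos psi)); lra. }
  (* sqrt 3 kappa sin psi = 2 PI (a - 2 c) and kappa cos psi = 2 PI a *)
  exists (inject_Z (- c) / inject_Z a)%Q.
  rewrite Q2R_div, !Q2R_inject_Z, opp_IZR.
  2:{ intro E. apply Ha0. unfold Qeq in E. simpl in E. apply IZR_eq. lia. }
  unfold tan.
  replace (sqrt 3 * (sin psi / cos psi))
    with ((sqrt 3 * kappa * sin psi) / (kappa * cos psi)) by (field; lra).
  replace (sqrt 3 * kappa * sin psi) with (2 * PI * IZR a - 4 * PI * IZR c) by lra.
  rewrite Ha. field. lra.
Qed.

Lemma in_Qinf_tan_integer_direction psi :
  in_Qinf_tan psi ->
  exists (m1 m2 : Z) (lam : R), (m1, m2) <> (0%Z, 0%Z) /\ lam <> 0 /\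
    cos psi = lam * sqrt 3 * IZR m1 / 2 /\
    sin psi = lam * (IZR m1 + 2 * IZR m2) / 2.
Proof.
  pose proof (sin2_cos2 psi) as Hsc. unfold Rsqr in Hsc.
  pose proof Rlt_sqrt3_0.
  intro Hq. destruct (Req_dec (cos psi) 0) as [H0 | Hc0].
  - assert (sin psi = 1 \/ sin psi = -1) as [Hs | Hs] by (rewrite H0 in Hsc; nra).
    + exists 0%Z, 1%Z, 1. rewrite H0, Hs. repeat split; [congruence | lra ..].
    + exists 0%Z, (-1)%Z, 1. rewrite H0, Hs. repeat split; [congruence | lra ..].
  - destruct Hq as [H0 | [[n d] Hq]]; [contradiction |].
    unfold Q2R, tan in Hq. simpl in Hq.
    assert (Hd : 0 < IZR (Z.pos d)) by (apply IZR_lt; lia).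
    (* sqrt 3 tan psi = (d + 2 n) / d *)
    exists (Z.pos d), n, (2 * cos psi / (sqrt 3 * IZR (Z.pos d))).
    repeat split.
    + congruence.
    + apply Rmult_integral_contrapositive. split; [lra |].
      apply Rinv_neq_0_compat. nra.
    + field. lra.
    + assert (Hs : sin psi = cos psi * (sqrt 3 * (sin psi / cos psi)) / sqrt 3)
        by (field; lra).
      rewrite Hs, (Rmult_comm (sqrt 3) (sin psi / cos psi)).
      replace (sin psi / cos psi * sqrt 3) with (2 * (IZR n * / IZR (Z.pos d)) + 1) by lra.
      field. lra.
Qed.

Lemma Z_gcd_factor (a b : Z) :
  (a, b) <> (0%Z, 0%Z) ->
  exists g k1 k2 : Z,
    (0 < g)%Z /\ a = (g * k1)%Z /\ b = (g * k2)%Z /\ Z.gcd k1 k2 = 1%Z.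
Proof.
  intro Hab.
  assert (Hg : Z.gcd a b <> 0%Z).
  { intro E. apply Z.gcd_eq_0 in E as [-> ->]. now apply Hab. }
  pose proof (Z.gcd_nonneg a b).
  destruct (Z.gcd_divide_l a b) as [k1 Hk1].
  destruct (Z.gcd_divide_r a b) as [k2 Hk2].
  exists (Z.gcd a b), k1, k2. repeat split; [lia | lia | lia |].
  assert (E : Z.gcd a b = (Z.gcd k1 k2 * Z.gcd a b)%Z).
  { rewrite <- (Z.abs_eq (Z.gcd a b)) at 2 by lia.
    rewrite <- Z.gcd_mul_mono_r, <- Hk1, <- Hk2. reflexivity. }
  nia.
Qed.

Lemma in_Qinf_tan_primitive_direction psi :
  in_Qinf_tan psi ->
  exists (m1 m2 : Z) (lam : R), (m1, m2) <> (0%Z, 0%Z) /\ Z.gcd m1 m2 = 1%Z /\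
    0 < lam /\
    cos psi = lam * sqrt 3 * IZR m1 / 2 /\
    sin psi = lam * (IZR m1 + 2 * IZR m2) / 2.
Proof.
  intro H.
  destruct (in_Qinf_tan_integer_direction psi H) as (a & b & lam & Hab & Hlam & Hc & Hs).
  destruct (Z_gcd_factor a b Hab) as (g & k1 & k2 & Hg & -> & -> & Hk).
  assert (HgR : 0 < IZR g) by (apply IZR_lt; lia).
  rewrite mult_IZR in Hc. rewrite !mult_IZR in Hs.
  destruct (Rlt_or_le 0 lam) as [Hpos | Hneg].
  - exists k1, k2, (lam * IZR g). repeat split; [| assumption | nra | lra | lra].
    intro E. injection E as -> ->. now apply Hab.
  - exists (- k1)%Z, (- k2)%Z, (- lam * IZR g). rewrite !opp_IZR.
    repeat split; [| now rewrite Z.gcd_opp_l, Z.gcd_opp_r | nra | lra | lra].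
    intro E. injection E as E1 E2. apply Hab. f_equal; lia.
Qed.

Definition eisenstein_norm (m1 m2 : Z) : R :=
  IZR m1 ^ 2 + IZR m1 * IZR m2 + IZR m2 ^ 2.

Lemma eisenstein_norm_pos m1 m2 :
  (m1, m2) <> (0%Z, 0%Z) -> 0 < eisenstein_norm m1 m2.
Proof.
  intro Hm. unfold eisenstein_norm.
  assert (IZR m1 <> 0 \/ IZR m2 <> 0) as [H | H].
  { destruct (Z.eq_dec m1 0) as [-> |]; [right | left]; intro E;
      apply eq_IZR in E; [subst; now apply Hm | contradiction]. }
  - assert (0 < IZR m1 * IZR m1) by now apply Rsqr_pos_lt. nra.
  - assert (0 < IZR m2 * IZR m2) by now apply Rsqr_pos_lt. nra.
Qed.

(* [cos psi ^ 2 + sin psi ^ 2 = lam ^ 2 * eisenstein_norm m1 m2] *)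
Lemma direction_scale psi m1 m2 lam :
  0 < lam ->
  cos psi = lam * sqrt 3 * IZR m1 / 2 ->
  sin psi = lam * (IZR m1 + 2 * IZR m2) / 2 ->
  lam * sqrt (eisenstein_norm m1 m2) = 1.
Proof.
  intros Hlam Hc Hs.
  pose proof (sin2_cos2 psi) as Hsc. unfold Rsqr in Hsc.
  pose proof (sqrt_sqrt 3) as H3.
  assert (HN : eisenstein_norm m1 m2 = (/ lam) ^ 2).
  { rewrite Hc, Hs in Hsc. unfold eisenstein_norm.
    apply (Rmult_eq_reg_l (lam ^ 2)); [| apply pow_nonzero; lra].
    field_simplify; [| lra]. nra. }
  rewrite HN, sqrt_pow2 by (left; now apply Rinv_0_lt_compat). field. lra.
Qed.

Lemma Z_coprime_multiples (t : R) (m1 m2 : Z) :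
  Z.gcd m1 m2 = 1%Z ->
  (exists a : Z, t * IZR m1 = IZR a) -> (exists b : Z, t * IZR m2 = IZR b) ->
  exists M : Z, t = IZR M.
Proof.
  intros Hg [a Ha] [b Hb].
  destruct (Z.gcd_bezout _ _ _ Hg) as (u & v & Huv).
  apply (f_equal IZR) in Huv. rewrite plus_IZR, !mult_IZR in Huv.
  exists (u * a + v * b)%Z. rewrite plus_IZR, !mult_IZR, <- Ha, <- Hb.
  rewrite <- (Rmult_1_r t) at 1. rewrite <- Huv. ring.
Qed.

(* With [t = kappa lam sqrt 3 / (4 PI)] the two phases are [2 PI t m1] and [- 2 PI t m2]. *)
Lemma eqLHS_eq0_iff_direction psi m1 m2 lam kappa :
  Z.gcd m1 m2 = 1%Z ->
  cos psi = lam * sqrt 3 * IZR m1 / 2 ->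
  sin psi = lam * (IZR m1 + 2 * IZR m2) / 2 ->
  eqLHS psi kappa = 0 <-> exists M : Z, kappa * lam * sqrt 3 = 4 * PI * IZR M.
Proof.
  intros Hg Hc Hs.
  pose proof PI_RGT_0. pose proof (sqrt_sqrt 3) as H3.
  set (t := kappa * lam * sqrt 3 / (4 * PI)).
  assert (Hkt : kappa * lam * sqrt 3 = 4 * PI * t) by (unfold t; field; lra).
  rewrite eqLHS_eq0_iff, Hc, Hs.
  replace (kappa * (lam * sqrt 3 * IZR m1 / 2)) with (2 * PI * (t * IZR m1))
    by (unfold t; field; lra).
  replace (kappa / 2 * (lam * sqrt 3 * IZR m1 / 2)
           - sqrt 3 * kappa / 2 * (lam * (IZR m1 + 2 * IZR m2) / 2))
    with (- (2 * PI * (t * IZR m2))) by (unfold t; field; lra).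
  rewrite in_2PIZ_opp, !in_2PIZ_scale, Hkt.
  split.
  - intros [[a Ha] [b Hb]].
    destruct (Z_coprime_multiples t m1 m2 Hg) as [M ->]; [now exists a | now exists b |].
    now exists M.
  - intros [M HM]. assert (t = IZR M) as ->
      by (apply (Rmult_eq_reg_l (4 * PI)); [exact HM | lra]).
    split; [exists (M * m1)%Z | exists (M * m2)%Z]; now rewrite mult_IZR.
Qed.

Lemma in_Qinf_tan_normal_form psi :
  in_Qinf_tan psi ->
  exists m1 m2 : Z,
    (m1, m2) <> (0%Z, 0%Z) /\ Z.gcd m1 m2 = 1%Z /\
    cos psi = sqrt 3 / 2 * (IZR m1 / sqrt (eisenstein_norm m1 m2)) /\
    sin psi = 1 / 2 * ((IZR m1 + 2 * IZR m2) / sqrt (eisenstein_norm m1 m2)) /\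
    (forall kappa : R, eqLHS psi kappa = 0 <->
       exists M : Z, kappa = 4 * IZR M * PI / sqrt 3 * sqrt (eisenstein_norm m1 m2)).
Proof.
  intro H.
  destruct (in_Qinf_tan_primitive_direction psi H)
    as (m1 & m2 & lam & Hm & Hg & Hlam & Hc & Hs).
  pose proof (direction_scale psi m1 m2 lam Hlam Hc Hs) as Hscale.
  pose proof (sqrt_lt_R0 _ (eisenstein_norm_pos m1 m2 Hm)) as HN.
  set (r := sqrt (eisenstein_norm m1 m2)) in *.
  pose proof Rlt_sqrt3_0.
  assert (Hlam' : lam = / r)
    by (apply (Rmult_eq_reg_r r); [rewrite Hscale; field |]; lra).
  exists m1, m2. fold r. do 2 (split; [assumption |]). split; [| split].
  - rewrite Hc, Hlam'. field. lra.
  - rewrite Hs, Hlam'. field. lra.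
  - intro kappa. rewrite (eqLHS_eq0_iff_direction psi m1 m2 lam kappa Hg Hc Hs), Hlam'.
    split; intros [M HM]; exists M.
    + replace kappa with (kappa * / r * sqrt 3 * r / sqrt 3) by (field; lra).
      rewrite HM. field. lra.
    + rewrite HM. field. lra.
Qed.

Theorem mainTheorem6 (psi : R) (Hpsi0 : 0 <= psi) (Hpsi1 : psi < 2 * PI) :
  ((exists kappa : R, kappa <> 0 /\ eqLHS psi kappa = 0) <-> in_Qinf_tan psi)
  /\
  (in_Qinf_tan psi ->
   exists m1 m2 : Z,
     (m1, m2) <> (0%Z, 0%Z) /\ Z.gcd (Z.abs m1) (Z.abs m2) = 1%Z /\
     let N := IZR m1 ^ 2 + IZR m1 * IZR m2 + IZR m2 ^ 2 in
     cos psi = sqrt 3 / 2 * (IZR m1 / sqrt N) /\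
     sin psi = 1 / 2 * ((IZR m1 + 2 * IZR m2) / sqrt N) /\
     (forall kappa : R, eqLHS psi kappa = 0 <->
        exists M : Z, kappa = 4 * IZR M * PI / sqrt 3 * sqrt N)).
Proof.
  split; [split |].
  - intros (kappa & Hk & H). exact (in_Qinf_tan_of_solution psi kappa Hk H).
  - intro H.
    destruct (in_Qinf_tan_normal_form psi H) as (m1 & m2 & Hm & _ & _ & _ & Hsol).
    pose proof (sqrt_lt_R0 _ (eisenstein_norm_pos m1 m2 Hm)).
    pose proof Rlt_sqrt3_0. pose proof PI_RGT_0.
    exists (4 * IZR 1 * PI / sqrt 3 * sqrt (eisenstein_norm m1 m2)). split.
    + apply Rmult_integral_contrapositive. split; [| lra].
      apply Rmult_integral_contrapositive. split; [simpl; lra |].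
      apply Rinv_neq_0_compat. lra.
    + apply Hsol. now exists 1%Z.
  - intro H.
    destruct (in_Qinf_tan_normal_form psi H) as (m1 & m2 & Hm & Hg & Hform).
    exists m1, m2. rewrite Z.gcd_abs_l, Z.gcd_abs_r. exact (conj Hm (conj Hg Hform)).
Qed.
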